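(* Suppose a unitary $C$ is written in the form $$C=H_{\mathbf a}P_{\mathbf d}Z_{\mathbf D}\,\mathbf H\,e^{\mathrm{i}\phi}X_{\mathbf u}Z_{\mathbf v}P_{\mathbf b}Z_{\mathbf B}X_{\mathbf A}$$ with $\mathbf a,\mathbf d,\mathbf u,\mathbf v,\mathbf b\in\mathbb F_2^n$, $\mathbf D,\mathbf B\in\mathcal B_n$, $\mathbf A\in GL_n(\mathbb F_2)$ and $\phi\in\{k\pi/4:k\in\mathbb Z\}$. Then for every $i\in\{0,\dots,n-1\}$, the product $H_iC$ can also be written in this form (with possibly different data $\mathbf a,\mathbf d,\mathbf D,\phi,\mathbf u,\mathbf v,\mathbf b,\mathbf B,\mathbf A$ of the same types).
   Context: Qubits are labelled $0,\dots,n-1$; computational basis $\{|x\rangle:x\in\mathbb F_2^n\}$; $\mathrm{i}=\sqrt{-1}$. One-qubit gates $\mathtt H=\frac1{\sqrt2}\begin{pmatrix}1&1\\1&-1\end{pmatrix}$, $\mathtt P=\mathrm{diag}(1,\mathrm{i})$, $\mathtt Z=\mathrm{diag}(1,-1)$, $\mathtt X=\begin{pmatrix}0&1\\1&0\end{pmatrix}$; $U_i$ denotes the gate $\mathtt U$ acting on qubit $i$, and $U_{\mathbf a}=\prod_iU_i^{a_i}$ for $\mathbf a\in\mathbb F_2^n$. $\mathbf H=\prod_{i=0}^{n-1}H_i$. For $\mathbf A\in GL_n(\mathbb F_2)$, $X_{\mathbf A}|x\rangle=|\mathbf Ax\rangle$. $\mathcal B_n$ is the set of symmetric $n\times n$ matrices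 over $\mathbb F_2$ with zero diagonal, and for $\mathbf B\in\mathcal B_n$, $Z_{\mathbf B}|x\rangle=(-1)^{\sum_{i<j}b_{ij}x_ix_j}|x\rangle$. *)

(* Complex scalars: algC (algebraic complex numbers), which
   contain 1/sqrt 2, 'i and e^{i pi/4} = (1 + 'i)/sqrt 2. *)
From HB Require Import structures.
From mathcomp Require Import all_boot all_order all_algebra all_field.
Set Implicit Arguments. Unset Strict Implicit. Unset Printing Implicit Defensive.
Import Order.TTheory GRing.Theory Num.Theory.
Local Open Scope ring_scope.

(* Computational basis labels: vectors x in F_2^n (column vectors). *)
Definition bits (n : nat) := 'cV['F_2]_n.

(* Dimension of the Hilbert space: #|F_2^n| (= 2^n); operators are square
   complex matrices indexed by the enumeration of the basis labels. *)
Definition dim (n : nat) := #|{: bits n}|.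
Definition op (n : nat) := 'M[algC]_(dim n).

Definition mx_of n (f : bits n -> bits n -> algC) : op n :=
  \matrix_(r, c) f (enum_val r) (enum_val c).

Definition b2o (t : 'F_2) : 'I_2 := inord (nat_of_ord t).

Definition gate_on n (i : 'I_n) (U : 'M[algC]_2) : op n :=
  mx_of (fun x y : bits n =>
    if [forall j : 'I_n, (j != i) ==> (x j ord0 == y j ord0)]
    then U (b2o (x i ord0)) (b2o (y i ord0)) else 0).

Definition Hm : 'M[algC]_2 :=
  \matrix_(r, c) ((sqrtC 2)^-1 * (if (r == 1 :> nat) && (c == 1 :> nat) then -1 else 1)).
Definition Pm : 'M[algC]_2 := \matrix_(r, c) (if r == c then (if r == 1 :> nat then 'i else 1) else 0).
Definition Zm : 'M[algC]_2 := \matrix_(r, c) (if r == c then (if r == 1 :> nat then -1 else 1) else 0).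
Definition Xm : 'M[algC]_2 := \matrix_(r, c) (if r == c then 0 else 1).

Definition Hg n (i : 'I_n) := gate_on i Hm.
Definition Pg n (i : 'I_n) := gate_on i Pm.
Definition Zg n (i : 'I_n) := gate_on i Zm.
Definition Xg n (i : 'I_n) := gate_on i Xm.

Definition gate_vec n (G : 'I_n -> op n) (a : bits n) : op n :=
  \big[mulmx/1%:M]_(i < n) (if a i ord0 == 1 then G i else 1%:M).

Definition Hall n : op n := \big[mulmx/1%:M]_(i < n) Hg i.

Definition XA n (A : 'M['F_2]_n) : op n :=
  mx_of (fun x y : bits n => if x == A *m y then 1 else 0).

Definition isB n (B : 'M['F_2]_n) : Prop := B^T = B /\ forall i, B i i = 0.

Definition sgnF2 (t : 'F_2) : algC := if t == 0 then 1 else -1.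

Definition ZB n (B : 'M['F_2]_n) : op n :=
  mx_of (fun x y : bits n =>
    if x == y then sgnF2 (\sum_(i < n) \sum_(j < n | (i < j)%N) B i j * x i ord0 * x j ord0)
    else 0).

(* e^{i k pi/4} = ((1 + i)/sqrt 2)^k, k in Z *)
Definition w8 : algC := (1 + 'i) / sqrtC 2.
Definition phase n (k : int) : op n := (w8 ^ k) *: 1%:M.

Definition normal_form n (a d : bits n) (D : 'M['F_2]_n) (k : int)
  (u v b : bits n) (B A : 'M['F_2]_n) : op n :=
  gate_vec (@Hg n) a *m gate_vec (@Pg n) d *m ZB D *m Hall n *m phase n k
  *m gate_vec (@Xg n) u *m gate_vec (@Zg n) v *m gate_vec (@Pg n) b *m ZB B *m XA A.

(* H_i squares to the identity and commutes with every H_j, j <> i, so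
   H_i H_a = H_(a + e_i): left multiplication by H_i only toggles bit i of
   the leading Hadamard vector and leaves every other datum unchanged. *)
From mathcomp Require Import all_boot all_order all_algebra all_field.
Import GRing.Theory Num.Theory.
Set Implicit Arguments. Unset Strict Implicit. Unset Printing Implicit Defensive.
Local Open Scope ring_scope.

Lemma mul_mx_of n (f g : bits n -> bits n -> algC) :
  mx_of f *m mx_of g = mx_of (fun x y => \sum_z f x z * g z y).
Proof.
apply/matrixP=> r c; rewrite !mxE.
rewrite (reindex (@enum_val _ (mem {: bits n}))) /=; last first.
  by apply: onW_bij; exact: enum_val_bij.
by apply: eq_bigr => s _; rewrite !mxE.
Qed.

Lemma eq_mx_of n (f g : bits n -> bits n -> algC) :
  (forall x y, f x y = g x y) -> mx_of f = mx_of g.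
Proof. by move=> fg; apply/matrixP=> r c; rewrite !mxE fg. Qed.

Lemma mx_of1 n : (1%:M : op n) = mx_of (fun x y => (x == y)%:R).
Proof. by apply/matrixP=> r c; rewrite !mxE (inj_eq enum_val_inj). Qed.

Lemma F2_0_or_1 (t : 'F_2) : t = 0 \/ t = 1.
Proof. by case: t => [[|[|m]] //= m_lt2]; [left|right]; apply: val_inj. Qed.

Lemma b2o0 : b2o 0 = 0. Proof. by apply: val_inj; rewrite /b2o /= inordK. Qed.
Lemma b2o1 : b2o 1 = 1. Proof. by apply: val_inj; rewrite /b2o /= inordK. Qed.

Lemma big_ord2 (R : Type) (idx : R) (op : R -> R -> R) (F : 'I_2 -> R) :
  \big[op/idx]_(r < 2) F r = op (F 0) (op (F 1) idx).
Proof.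
by rewrite !big_ord_recl big_ord0; congr (op (F _) (op (F _) _)); apply: val_inj.
Qed.

Section Qubits.
Variable n : nat.
Implicit Types (i j : 'I_n) (x y z : bits n) (t : 'F_2).

Definition agree_off i x z := [forall k, (k != i) ==> (x k ord0 == z k ord0)].
Definition agree_off2 i j x z :=
  [forall k, (k != i) && (k != j) ==> (x k ord0 == z k ord0)].

Definition set_bit x i t : bits n := \col_k (if k == i then t else x k ord0).

Lemma set_bit_at x i t : set_bit x i t i ord0 = t.
Proof. by rewrite mxE eqxx. Qed.

Lemma set_bit_off x i t k : k != i -> set_bit x i t k ord0 = x k ord0.
Proof. by rewrite mxE => /negbTE ->. Qed.

Lemma agree_off_set_bit x i t : agree_off i x (set_bit x i t).
Proof. by apply/forallP => k; apply/implyP => ki; rewrite set_bit_off. Qed.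

Lemma agree_off_set_bitl x y i t :
  agree_off i (set_bit x i t) y = agree_off i x y.
Proof. by apply: eq_forallb => k; case ki: (k != i); rewrite //= set_bit_off. Qed.

Lemma agree_off_set_bit2 x y i j t : i != j ->
  agree_off j (set_bit x i t) y = (t == y i ord0) && agree_off2 i j x y.
Proof.
move=> ij; apply/idP/andP.
- move/forallP=> H; split; first by move: (H i); rewrite ij set_bit_at.
  apply/forallP => k; apply/implyP => /andP [ki kj].
  by move: (H k); rewrite kj set_bit_off.
- case=> /eqP -> /forallP H; apply/forallP => k; apply/implyP => kj.
  case: (eqVneq k i) => [->|ki]; first by rewrite set_bit_at.
  by rewrite set_bit_off //; move: (H k); rewrite ki kj.
Qed.

Lemma agree_off_eq x y i : agree_off i x y -> x i ord0 = y i ord0 -> x = y.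
Proof.
move=> /forallP xy xyi; apply/matrixP => k l; rewrite (ord1 l).
case: (eqVneq k i) => [->|ki] //.
by move: (xy k); rewrite ki => /eqP.
Qed.

Lemma sum_agree_off i x (f : bits n -> algC) :
  (forall z, ~~ agree_off i x z -> f z = 0) ->
  \sum_z f z = f (set_bit x i 0) + f (set_bit x i 1).
Proof.
move=> f0.
have ne01 : set_bit x i 1 != set_bit x i 0.
  by apply/eqP => /matrixP /(_ i ord0); rewrite !set_bit_at.
rewrite (bigD1 (set_bit x i 0)) //= (bigD1 (set_bit x i 1)) //= big1 ?addr0 //.
move=> z /andP [z1 z0]; apply: f0; apply/negP => xz.
have Ez : z = set_bit x i (z i ord0).
  by apply/esym/(@agree_off_eq _ _ i); rewrite ?agree_off_set_bitl ?set_bit_at.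
by case: (F2_0_or_1 (z i ord0)) Ez => -> Ez; [move: z1|move: z0]; rewrite -Ez eqxx.
Qed.

Lemma gate_on_mul i U V : gate_on i U *m gate_on i V = gate_on i (U *m V).
Proof.
rewrite /gate_on mul_mx_of; apply: eq_mx_of => x y.
rewrite (@sum_agree_off i x); last first.
  by move=> z xz; rewrite -/(agree_off i x z) (negbTE xz) mul0r.
rewrite -!/(agree_off _ _ _) !agree_off_set_bit !agree_off_set_bitl !set_bit_at.
by rewrite mxE big_ord2 b2o0 b2o1; case: (agree_off i x y); rewrite ?mulr0 ?addr0.
Qed.

Lemma gate_on_mul_neq i j U V : i != j ->
  gate_on i U *m gate_on j V =
  mx_of (fun x y => if agree_off2 i j x y then
     U (b2o (x i ord0)) (b2o (y i ord0)) * V (b2o (x j ord0)) (b2o (y j ord0))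
     else 0).
Proof.
move=> ij; rewrite /gate_on mul_mx_of; apply: eq_mx_of => x y.
rewrite (@sum_agree_off i x); last first.
  by move=> z xz; rewrite -/(agree_off i x z) (negbTE xz) mul0r.
rewrite -!/(agree_off _ _ _) !agree_off_set_bit !agree_off_set_bit2 //.
rewrite !set_bit_at !set_bit_off 1?eq_sym //.
case: (agree_off2 i j x y); rewrite ?andbF ?mulr0 ?addr0 //.
by case: (F2_0_or_1 (y i ord0)) => ->; rewrite /= ?b2o0 ?b2o1 ?mulr0 ?addr0 ?add0r.
Qed.

Lemma gate_on_comm i j U V : i != j ->
  gate_on i U *m gate_on j V = gate_on j V *m gate_on i U.
Proof.
move=> ij; rewrite gate_on_mul_neq // gate_on_mul_neq 1?eq_sym //.
apply: eq_mx_of => x y; rewrite mulrC.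
suff -> : agree_off2 j i x y = agree_off2 i j x y by [].
by apply: eq_forallb => k; rewrite andbC.
Qed.

Lemma gate_on1 i : gate_on i 1%:M = 1%:M.
Proof.
rewrite mx_of1 /gate_on; apply: eq_mx_of => x y.
rewrite -/(agree_off i x y) mxE.
case: (eqVneq x y) => [<-|xy].
  suff -> : agree_off i x x by rewrite eqxx.
  by apply/forallP => k; rewrite eqxx implybT.
case xy_off: (agree_off i x y) => //.
suff /negbTE -> : b2o (x i ord0) != b2o (y i ord0) by [].
apply: contraNneq xy => bxy; apply/eqP; apply: (agree_off_eq xy_off).
by move: bxy; case: (F2_0_or_1 (x i ord0)) => ->;
  case: (F2_0_or_1 (y i ord0)) => ->; rewrite ?b2o0 ?b2o1.
Qed.

End Qubits.

Lemma Hm_invol : Hm *m Hm = 1%:M.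
Proof.
have s2 : (sqrtC 2)^-1 * (sqrtC 2)^-1 = 2^-1 :> algC by rewrite -invfM -expr2 sqrtCK.
have h2 : 2^-1 + 2^-1 = 1 :> algC.
  by rewrite -mulr2n -[_ *+ 2]mulr_natr mulVf // pnatr_eq0.
apply/matrixP => r c; rewrite !mxE big_ord2 addr0 !mxE.
by case: r => [[|[|?]] ?] //; case: c => [[|[|?]] ?] //=;
  rewrite ?(mulr1, mulrN1, mulNr, mulrN, opprK) s2 ?h2 ?subrr ?addrN.
Qed.

Lemma Hg_invol n (i : 'I_n) : Hg i *m Hg i = 1%:M.
Proof. by rewrite /Hg gate_on_mul Hm_invol gate_on1. Qed.

Lemma Hg_comm n (i j : 'I_n) : i != j -> Hg i *m Hg j = Hg j *m Hg i.
Proof. exact: gate_on_comm. Qed.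

Lemma mulmx_big_at (R : ringType) m (I : eqType) (r : seq I) (i : I)
    (F : I -> 'M[R]_m) (X : 'M[R]_m) :
  uniq r -> i \in r -> (forall j, j != i -> X *m F j = F j *m X) ->
  X *m \big[mulmx/1%:M]_(j <- r) F j =
  \big[mulmx/1%:M]_(j <- r) (if j == i then X *m F j else F j).
Proof.
move=> + + XF; elim: r => [|j r IHr] //= /andP [jr ur].
rewrite !big_cons in_cons mulmxA; case: (eqVneq j i) => [ji _|ji /= ir].
  rewrite -ji; congr (_ *m _); apply: eq_big_seq => k kr.
  by case: eqP kr jr => [-> -> //|].
by rewrite XF // -mulmxA IHr.
Qed.

Lemma Hg_gate_vec n (i : 'I_n) (a : bits n) :
  Hg i *m gate_vec (@Hg n) a = gate_vec (@Hg n) (a + delta_mx i ord0).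
Proof.
rewrite /gate_vec (mulmx_big_at (i := i)) ?index_enum_uniq ?mem_index_enum //; last first.
  move=> j ji; case: ifP => _; last by rewrite mulmx1 mul1mx.
  by apply: Hg_comm; rewrite eq_sym.
apply: eq_bigr => j _; rewrite !mxE eqxx andbT.
case: (eqVneq j i) => [->|] /=; last by rewrite addr0.
by case: (F2_0_or_1 (a i ord0)) => ->; rewrite ?Hg_invol ?mulmx1.
Qed.

Theorem lemma4p1 (n : nat) (C : op n)
  (a d u v b : bits n) (D B A : 'M['F_2]_n) (k : int) :
  isB D -> isB B -> A \in unitmx ->
  C = normal_form a d D k u v b B A ->
  forall i : 'I_n,
  exists (a' d' u' v' b' : bits n) (D' B' A' : 'M['F_2]_n) (k' : int),
    [/\ isB D', isB B', A' \in unitmx &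
        Hg i *m C = normal_form a' d' D' k' u' v' b' B' A'].
Proof.
move=> HD HB HA -> i.
exists (a + delta_mx i ord0), d, u, v, b, D, B, A, k; split => //.
by rewrite /normal_form !mulmxA Hg_gate_vec.
Qed.
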